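(* Let $N,T\ge1$. Let $\bar{\boldsymbol{\Psi}}_{\mathrm{id}}=\mathrm{diag}(\bar\psi_{\mathrm{id},1},\dots,\bar\psi_{\mathrm{id},N})$ with all $\bar\psi_{\mathrm{id},i}>0$, let $\bar\psi_{\mathrm{f},1}>0$, let $\mathbf{w}_1\in\mathbb{R}^N\setminus\{\mathbf{0}\}$, let $\theta\in[0,1]$, and let $\alpha_1,\dots,\alpha_T>0$, $\beta_1,\dots,\beta_T>0$ with $\sum_t\alpha_t=\sum_t\beta_t=1$. For a nonzero $\mathbf{x}_0\in\mathbb{R}^N$ define $$\Upsilon(\mathbf{x}_0)=\frac{\sum_{t=1}^T(\alpha_t(1-\theta)+\beta_t\theta)^2\,\mathbf{x}_0^\top\left(\alpha_t\bar{\boldsymbol{\Psi}}_{\mathrm{id}}+\beta_t\bar\psi_{\mathrm{f},1}\mathbf{w}_1\mathbf{w}_1^\top\right)^{-1}\mathbf{x}_0}{\mathbf{x}_0^\top\left(\bar{\boldsymbol{\Psi}}_{\mathrm{id}}+\bar\psi_{\mathrm{f},1}\mathbf{w}_1\mathbf{w}_1^\top\right)^{-1}\mathbf{x}_0}.$$ Let $\gamma_t=\beta_t/\alpha_t$, $\eta_1=\bar\psi_{\mathrm{f},1}\mathbf{w}_1^\top\bar{\boldsymbol{\Psi}}_{\mathrm{id}}^{-1}\mathbf{w}_1$, and $\Delta=\sum_{t=1}^T\frac{\alpha_t(1-\theta(1-\gamma_t))^2(1-\gamma_t)}{1+\eta_1\gamma_t}$. Then $$\Upsilon(\mathbf{x}_0)=1+\theta^2\Big(\sum_{t=1}^T\frac{\beta_t^2}{\alpha_t}-1\Big)+\Delta\cdot\left(\frac{\mathbf{x}_0^\top\bar{\boldsymbol{\Psi}}_{\mathrm{id}}^{-1}\mathbf{x}_0}{(\mathbf{w}_1^\top\bar{\boldsymbol{\Psi}}_{\mathrm{id}}^{-1}\mathbf{x}_0)^2}\cdot\frac{1+\eta_1}{\bar\psi_{\mathrm{f},1}}-1\right)^{-1},$$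 where the last term is interpreted as $0$ when $\mathbf{w}_1^\top\bar{\boldsymbol{\Psi}}_{\mathrm{id}}^{-1}\mathbf{x}_0=0$.
   Context: Single index fund setting: time-$t$ price impact matrix $\mathbf{G}_t=\left(\alpha_t\bar{\boldsymbol{\Psi}}_{\mathrm{id}}+\beta_t\bar\psi_{\mathrm{f},1}\mathbf{w}_1\mathbf{w}_1^\top\right)^{-1}$, expected cost of a schedule $(\mathbf{v}_t)$ is $\sum_t\tfrac12\mathbf{v}_t^\top\mathbf{G}_t\mathbf{v}_t$. The numerator of $\Upsilon$ (times $\tfrac12$) is the cost of the separable schedule $\mathbf{v}_t^{\mathrm{sep}}=(\alpha_t(1-\theta)+\beta_t\theta)\mathbf{x}_0$, and the denominator (times $\tfrac12$) is the minimal cost of liquidating $\mathbf{x}_0$ subject to $\sum_t\mathbf{v}_t=\mathbf{x}_0$. $\theta$ is the fraction of traded volume attributable to index-fund investors. *)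

From mathcomp Require Import all_boot all_order all_algebra.
Set Implicit Arguments. Unset Strict Implicit. Unset Printing Implicit Defensive.
Import Order.TTheory GRing.Theory Num.Theory.
Local Open Scope ring_scope.

Definition qform (R : comNzRingType) (N : nat) (x : 'cV[R]_N) (A : 'M[R]_N)
  (y : 'cV[R]_N) : R := (x^T *m A *m y) ord0 ord0.

Definition Psi_id (R : comNzRingType) (N : nat) (psi : 'I_N -> R) : 'M[R]_N :=
  diag_mx (\row_i psi i).

Definition Gmat (R : comUnitRingType) (N : nat) (psi : 'I_N -> R) (psif : R)
  (w : 'cV[R]_N) (a b : R) : 'M[R]_N :=
  invmx (a *: Psi_id psi + (b * psif) *: (w *m w^T)).

Definition Upsilon (R : fieldType) (N T : nat) (psi : 'I_N -> R) (psif : R)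
  (w : 'cV[R]_N) (theta : R) (alpha beta : 'I_T -> R) (x0 : 'cV[R]_N) : R :=
  (\sum_(t < T) (alpha t * (1 - theta) + beta t * theta) ^+ 2
       * qform x0 (Gmat psi psif w (alpha t) (beta t)) x0)
  / qform x0 (Gmat psi psif w 1 1) x0.

From mathcomp Require Import all_boot all_order all_algebra.
From mathcomp Require Import ring lra.
Set Implicit Arguments. Unset Strict Implicit. Unset Printing Implicit Defensive.
Import Order.TTheory GRing.Theory Num.Theory.
Local Open Scope ring_scope.

(* Sherman-Morrison reduces every quadratic form in the statement to the
   scalars [q = x0^T Psi^-1 x0], [s = w^T Psi^-1 w] and [c = w^T Psi^-1 x0]:
   [x0^T G(a, b) x0 = q / a - b psif c^2 / (a (a + b psif s))].  Put
   [m_t = alpha_t (1 - theta) + beta_t theta] and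
   [kappa = psif c^2 / (1 + psif s)].  Then the [t]-th numerator term is
   [(q - kappa) m_t^2 / alpha_t] plus [kappa] times the [t]-th summand of
   [Delta], and the denominator is [q - kappa], which is positive by
   Cauchy-Schwarz for the inner product [Psi^-1].  Since the [alpha_t] and the
   [beta_t] both sum to one,
   [sum_t m_t^2 / alpha_t = 1 + theta^2 (sum_t beta_t^2 / alpha_t - 1)], and
   [kappa / (q - kappa)], which vanishes with [c], is the inverse of the
   bracket multiplying [Delta]. *)

Lemma mulmx1_invmx (R : comUnitRingType) n (A B : 'M[R]_n) :
  A *m B = 1%:M -> invmx A = B.
Proof.
move=> AB; have [uA _] := mulmx1_unit AB.
by rewrite -[invmx A]mulmx1 -AB mulmxA mulVmx // mul1mx.
Qed.

Lemma diag_mx_mulV (R : fieldType) n (d : 'I_n -> R) :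
  (forall i, d i != 0) -> diag_mx (\row_i d i) *m diag_mx (\row_i (d i)^-1) = 1%:M.
Proof.
move=> d_neq0; rewrite mulmx_diag -diag_const_mx; congr diag_mx; apply/rowP => i.
by rewrite !mxE mulfV.
Qed.

Section QuadraticForm.
Variables (R : comNzRingType) (n : nat).
Implicit Types (x y z : 'cV[R]_n) (A B : 'M[R]_n).

Lemma qformDm x A B y : qform x (A + B) y = qform x A y + qform x B y.
Proof. by rewrite /qform mulmxDr mulmxDl mxE. Qed.

Lemma qformNm x A y : qform x (- A) y = - qform x A y.
Proof. by rewrite /qform mulmxN mulNmx mxE. Qed.

Lemma qformZm x k A y : qform x (k *: A) y = k * qform x A y.
Proof. by rewrite /qform -scalemxAr -scalemxAl mxE. Qed.

Lemma qform_linearl a b x y A z :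
  qform (a *: x + b *: y) A z = a * qform x A z + b * qform y A z.
Proof.
by rewrite /qform linearD !linearZ /= !mulmxDl -!scalemxAl mxE !mxE.
Qed.

Lemma qform_linearr a b x y A z :
  qform z A (a *: x + b *: y) = a * qform z A x + b * qform z A y.
Proof. by rewrite /qform mulmxDr -!scalemxAr mxE !mxE. Qed.

Lemma qform_tr x A y : qform x A y = qform y A^T x.
Proof. by rewrite /qform -[in RHS](trmxK x) -!trmx_mul [RHS]mxE mulmxA. Qed.

Lemma qform_outer x A u y :
  qform x (A *m u *m (u^T *m A)) y = qform x A u * qform u A y.
Proof.
rewrite /qform !mulmxA.
have -> : x^T *m A *m u *m u^T *m A *m y = (x^T *m A *m u) *m (u^T *m A *m y).
  by rewrite !mulmxA.
by rewrite mxE big_ord1.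
Qed.

Lemma qform_diag x (d : 'rV[R]_n) y :
  qform x (diag_mx d) y = \sum_i x i 0 * d 0 i * y i 0.
Proof. by rewrite /qform mul_mx_diag mxE; apply: eq_bigr => i _; rewrite !mxE. Qed.

End QuadraticForm.

Section PositiveDefinite.
Variables (R : realDomainType) (n : nat).
Implicit Types (x w : 'cV[R]_n) (A : 'M[R]_n).

Definition posdef_mx A := forall x, x != 0 -> 0 < qform x A x.

Lemma qform0l A y : qform 0 A y = 0 :> R.
Proof. by rewrite /qform trmx0 !mul0mx mxE. Qed.

Lemma posdef_qform_ge0 A x : posdef_mx A -> 0 <= qform x A x.
Proof.
move=> A_pd; have [->|x_neq0] := eqVneq x 0; first by rewrite qform0l.
exact/ltW/A_pd.
Qed.

Lemma posdef_diag (d : 'rV[R]_n) : (forall i, 0 < d 0 i) -> posdef_mx (diag_mx d).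
Proof.
move=> d_gt0 x x_neq0; rewrite qform_diag.
have term_ge0 i : 0 <= x i 0 * d 0 i * x i 0.
  by rewrite mulrAC -expr2 mulr_ge0 ?sqr_ge0 ?ltW.
rewrite lt_def sumr_ge0 ?andbT // psumr_neq0 //; apply/hasP.
have [i xi_neq0] : exists i, x i 0 != 0.
  apply/existsP; apply: contraR x_neq0 => /existsPn x0.
  by apply/eqP/matrixP => i j; rewrite (ord1 j) mxE; exact/eqP/negPn/x0.
exists i; first by rewrite mem_index_enum.
by rewrite mulrAC -expr2 mulr_gt0 ?exprn_even_gt0 ?xi_neq0 ?orbT.
Qed.

(* Expand the nonnegative [qform v A v] at [v = s x - c w]. *)
Lemma qform_CauchySchwarz A x w : A^T = A -> posdef_mx A ->
  qform w A x ^+ 2 <= qform x A x * qform w A w.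
Proof.
move=> A_sym A_pd; have [->|w_neq0] := eqVneq w 0.
  by rewrite !qform0l expr0n mulr0.
set q := qform x A x; set s := qform w A w; set c := qform w A x.
have xw : qform x A w = c by rewrite qform_tr A_sym.
have s_gt0 : 0 < s := A_pd w w_neq0.
have := posdef_qform_ge0 (s *: x + (- c) *: w) A_pd.
rewrite !(qform_linearl, qform_linearr) -/q -/s -/c xw.
have -> : s * (s * q + - c * c) + - c * (s * c + - c * s) = s * (q * s - c ^+ 2).
  by ring.
by rewrite pmulr_rge0 // subr_ge0.
Qed.

End PositiveDefinite.

Section ShermanMorrison.
Variables (R : fieldType) (n : nat) (P A : 'M[R]_n) (w : 'cV[R]_n) (a k : R).
Hypotheses (PA : P *m A = 1%:M) (a_neq0 : a != 0)
  (den_neq0 : a + k * qform w A w != 0).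

Lemma invmx_rank1_update :
  invmx (a *: P + k *: (w *m w^T)) =
  a^-1 *: A - (k / (a * (a + k * qform w A w))) *: (A *m w *m (w^T *m A)).
Proof.
apply: mulmx1_invmx; set s := qform w A w; set l := k / _.
have PAwwA : P *m (A *m w *m (w^T *m A)) = w *m (w^T *m A).
  by rewrite !mulmxA PA mul1mx.
have wwA : w *m w^T *m A = w *m (w^T *m A) by rewrite mulmxA.
have wwAwwA : w *m w^T *m (A *m w *m (w^T *m A)) = s *: (w *m (w^T *m A)).
  have -> : w *m w^T *m (A *m w *m (w^T *m A)) = w *m (w^T *m A *m w) *m (w^T *m A).
    by rewrite !mulmxA.
  by rewrite [w^T *m A *m w]mx11_scalar mul_mx_scalar -scalemxAl.
rewrite mulmxDl !mulmxBr -!scalemxAl -!scalemxAr !scalerA PA PAwwA wwA wwAwwA.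
rewrite scalerA mulfV // scale1r -scalerBl -addrA -scaleNr -scalerDl.
have -> : - (a * l) + (k / a - k * l * s) = 0.
  by rewrite /l; field; rewrite a_neq0 den_neq0.
by rewrite scale0r addr0.
Qed.

Lemma qform_invmx_rank1_update x y :
  qform x (invmx (a *: P + k *: (w *m w^T))) y =
  a^-1 * qform x A y
  - k / (a * (a + k * qform w A w)) * (qform x A w * qform w A y).
Proof. by rewrite invmx_rank1_update qformDm qformNm !qformZm qform_outer. Qed.

End ShermanMorrison.

Lemma sum_mix_sq_div (F : fieldType) T (alpha beta : 'I_T -> F) (theta : F) :
  (forall t, alpha t != 0) ->
  \sum_(t < T) alpha t = 1 -> \sum_(t < T) beta t = 1 ->
  \sum_(t < T) (alpha t * (1 - theta) + beta t * theta) ^+ 2 / alpha t =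
  1 + theta ^+ 2 * (\sum_(t < T) beta t ^+ 2 / alpha t - 1).
Proof.
move=> alpha_neq0 sum_alpha sum_beta.
rewrite (eq_bigr (fun t => (1 - theta) ^+ 2 * alpha t
    + 2 * (1 - theta) * theta * beta t + theta ^+ 2 * (beta t ^+ 2 / alpha t))).
  by rewrite !big_split /= -!mulr_sumr sum_alpha sum_beta; ring.
by move=> t _; field.
Qed.

Lemma mix_sq_rank1_split (F : fieldType) (a b theta q c f s : F) :
  a != 0 -> 1 + f * s != 0 -> a + b * f * s != 0 ->
  let kappa := f * c ^+ 2 / (1 + f * s) in
  (a * (1 - theta) + b * theta) ^+ 2
    * (a^-1 * q - b * f / (a * (a + b * f * s)) * c ^+ 2) =
  (q - kappa) * ((a * (1 - theta) + b * theta) ^+ 2 / a)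
  + kappa * (a * (1 - theta * (1 - b / a)) ^+ 2 * (1 - b / a)
             / (1 + f * s * (b / a))).
Proof.
move=> a_neq0 den1_neq0 den_neq0 kappa; rewrite /kappa; field.
by rewrite a_neq0 den1_neq0 [f * s * b]mulrC mulrA den_neq0.
Qed.

Lemma rank1_ratio_split (F : fieldType) (S Delta q c f eta : F) :
  f != 0 -> 1 + eta != 0 ->
  let kappa := f * c ^+ 2 / (1 + eta) in
  q - kappa != 0 ->
  ((q - kappa) * S + kappa * Delta) / (q - kappa) =
  S + (if c == 0 then 0 else Delta * (q / c ^+ 2 * ((1 + eta) / f) - 1)^-1).
Proof.
rewrite /= => f_neq0 eta_neq0 den_neq0; rewrite mulrDl mulrAC divff // mul1r.
have [->|c_neq0] := eqVneq c 0; first by rewrite expr0n mulr0 !mul0r addr0.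
congr (_ + _); field.
have -> : q * (1 + eta) + -1 * (c ^+ 2 * f) = (q - f * c ^+ 2 / (1 + eta)) * (1 + eta).
  by field.
by rewrite f_neq0 c_neq0 mulf_neq0.
Qed.

Lemma rank1_denom_gt0 (R : realFieldType) (q c f s : R) :
  0 < q -> 0 <= f -> 0 <= s -> c ^+ 2 <= q * s ->
  0 < q - f * c ^+ 2 / (1 + f * s).
Proof.
move=> q_gt0 f_ge0 s_ge0 cs.
have fs_ge0 : 0 <= f * s by rewrite mulr_ge0.
have -> : q - f * c ^+ 2 / (1 + f * s) = (q + f * (q * s - c ^+ 2)) / (1 + f * s).
  by field; rewrite gt_eqF //; lra.
by rewrite divr_gt0 ?ltr_wpDr ?mulr_ge0 ?subr_ge0 //; lra.
Qed.

Section PriceImpact.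
Variables (R : realFieldType) (N : nat) (psi : 'I_N -> R) (psif : R) (w : 'cV[R]_N).
Hypotheses (psi_gt0 : forall i, 0 < psi i) (psif_gt0 : 0 < psif).

Let psi_neq0 i : psi i != 0. Proof. by rewrite gt_eqF. Qed.

Lemma invmx_Psi_id : invmx (Psi_id psi) = diag_mx (\row_i (psi i)^-1).
Proof. exact/mulmx1_invmx/diag_mx_mulV. Qed.

Lemma invmx_Psi_id_sym : (invmx (Psi_id psi))^T = invmx (Psi_id psi).
Proof. by rewrite invmx_Psi_id tr_diag_mx. Qed.

Lemma posdef_invmx_Psi_id : posdef_mx (invmx (Psi_id psi)).
Proof. by rewrite invmx_Psi_id; apply: posdef_diag => i; rewrite mxE invr_gt0. Qed.

Lemma qform_Gmat x a b : 0 < a -> 0 <= b ->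
  let Pinv := invmx (Psi_id psi) in
  qform x (Gmat psi psif w a b) x =
  a^-1 * qform x Pinv x
  - b * psif / (a * (a + b * psif * qform w Pinv w)) * qform w Pinv x ^+ 2.
Proof.
move=> a_gt0 b_ge0 Pinv.
have PPinv : Psi_id psi *m Pinv = 1%:M by rewrite /Pinv invmx_Psi_id diag_mx_mulV.
have s_ge0 : 0 <= qform w Pinv w := posdef_qform_ge0 w posdef_invmx_Psi_id.
rewrite (qform_invmx_rank1_update PPinv) ?gt_eqF ?ltr_wpDr ?mulr_ge0 ?(ltW psif_gt0) //.
by rewrite [qform x Pinv w]qform_tr invmx_Psi_id_sym expr2.
Qed.

End PriceImpact.

Theorem proposition5 (R : realFieldType) (N T : nat)
  (hN : (1 <= N)%N) (hT : (1 <= T)%N)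
  (psi : 'I_N -> R) (hpsi : forall i, 0 < psi i)
  (psif : R) (hpsif : 0 < psif)
  (w : 'cV[R]_N) (hw : w != 0)
  (theta : R) (htheta0 : 0 <= theta) (htheta1 : theta <= 1)
  (alpha beta : 'I_T -> R)
  (halpha : forall t, 0 < alpha t) (hbeta : forall t, 0 < beta t)
  (hsa : \sum_(t < T) alpha t = 1) (hsb : \sum_(t < T) beta t = 1)
  (x0 : 'cV[R]_N) (hx0 : x0 != 0) :
  let Pinv := invmx (Psi_id psi) in
  let gamma := fun t => beta t / alpha t in
  let eta1 := psif * qform w Pinv w in
  let Delta := \sum_(t < T)
      alpha t * (1 - theta * (1 - gamma t)) ^+ 2 * (1 - gamma t)
        / (1 + eta1 * gamma t) in
  let c := qform w Pinv x0 in
  Upsilon psi psif w theta alpha beta x0 =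
    1 + theta ^+ 2 * (\sum_(t < T) beta t ^+ 2 / alpha t - 1)
      + (if c == 0 then 0
         else Delta * (qform x0 Pinv x0 / c ^+ 2 * ((1 + eta1) / psif) - 1)^-1).
Proof.
move=> Pinv gamma eta1 Delta c.
have q_gt0 : 0 < qform x0 Pinv x0 := posdef_invmx_Psi_id hpsi hx0.
have s_ge0 : 0 <= qform w Pinv w := posdef_qform_ge0 w (posdef_invmx_Psi_id hpsi).
have cs : c ^+ 2 <= qform x0 Pinv x0 * qform w Pinv w.
  exact: qform_CauchySchwarz (invmx_Psi_id_sym hpsi) (posdef_invmx_Psi_id hpsi).
have eta1_neq0 : 1 + eta1 != 0.
  by rewrite /eta1 gt_eqF // ltr_wpDr ?ltr01 ?mulr_ge0 ?(ltW hpsif).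
have alpha_neq0 t : alpha t != 0 by rewrite gt_eqF.
have den_neq0 t : alpha t + beta t * psif * qform w Pinv w != 0.
  by rewrite gt_eqF // ltr_wpDr ?mulr_ge0 ?(ltW hpsif) ?(ltW (hbeta t)).
set q := qform x0 Pinv x0 in q_gt0 cs *.
set kappa := psif * c ^+ 2 / (1 + eta1).
have split_term t :
    (alpha t * (1 - theta) + beta t * theta) ^+ 2
      * qform x0 (Gmat psi psif w (alpha t) (beta t)) x0 =
    (q - kappa) * ((alpha t * (1 - theta) + beta t * theta) ^+ 2 / alpha t)
    + kappa * (alpha t * (1 - theta * (1 - gamma t)) ^+ 2 * (1 - gamma t)
               / (1 + eta1 * gamma t)).
  by rewrite qform_Gmat ?ltW // mix_sq_rank1_split.
have denominator : qform x0 (Gmat psi psif w 1 1) x0 = q - kappa.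
  by rewrite qform_Gmat // invr1 !mul1r mulrAC.
have den_gt0 : 0 < q - kappa := rank1_denom_gt0 q_gt0 (ltW hpsif) s_ge0 cs.
rewrite /Upsilon (eq_bigr _ (fun t _ => split_term t)) big_split /= -!mulr_sumr.
by rewrite sum_mix_sq_div // denominator rank1_ratio_split ?(gt_eqF hpsif) ?(gt_eqF den_gt0).
Qed.
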